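(* Let $X_1,X_2,\dots$ be i.i.d. from an unknown law $P_0$ on $\mathbb{R}^p$. For a variational parameter $\phi$ in a parameter set $\Phi$, define the observable law $$P_\phi(x)=\iint P(x\mid z;\theta)\,\pi_Z(z)\,q_\phi(\theta)\,dz\,d\theta,$$ the profiled criterion $$m(x;\phi)=\sup_{z\in\mathbb{R}^{d_z}}\Big\{\mathbb{E}_{q_\phi(\theta)}[\log P(x\mid z;\theta)]+\log\pi_Z(z)\Big\},$$ the population objective $\widetilde{\mathcal{J}}(\phi)=\mathbb{E}_{P_0}[m(X;\phi)]-\mathrm{KL}(q_\phi\|\pi_\theta)$ and the empirical objective $\widetilde{\mathcal{J}}_N(\phi)=\frac1N\sum_{i=1}^N m(X_i;\phi)-\mathrm{KL}(q_\phi\|\pi_\theta)$. Let $\Phi^\star=\arg\max_{\phi\in\Phi}\widetilde{\mathcal{J}}(\phi)$, and assume all $\phi\in\Phi^\star$ induce the same observable law, denoted $P^\star$. Let $\Phi_1\subseteq\Phi_2\subseteq\cdots\subseteq\Phi$ be a sieve with $\bigcup_N\Phi_N$ dense in $\Phi$, and let $\hat\phi_N\in\Phi_N$ be the fitted parameter at sample size $N$, with algorithmic suboptimality $\delta_N^{\mathrm{alg}}=\sup_{\phi\in\Phi_N}\widetilde{\mathcal{J}}_N(\phi)-\widetilde{\mathcal{J}}_N(\hat\phi_N)$. Let $d$ be the bounded-Lipschitz distance $$d(P,Q)=\sup_{\|f\|_\infty\le1,\ \mathrm{Lip}(f)\le1}\Big|\int f\,dP-\int f\,dQ\Big|.$$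 Assume: (i) $\omega_N:=\sup_{\phi\in\Phi_N}|\widetilde{\mathcal{J}}_N(\phi)-\widetilde{\mathcal{J}}(\phi)|\to0$ in probability; (ii) $\delta_N^{\mathrm{alg}}\to0$ in probability; (iii) $r_N:=\sup_{\phi\in\Phi}\widetilde{\mathcal{J}}(\phi)-\sup_{\phi\in\Phi_N}\widetilde{\mathcal{J}}(\phi)\to0$; (iv) for every $\varepsilon>0$, $\Delta(\varepsilon):=\sup_{\phi\in\Phi}\widetilde{\mathcal{J}}(\phi)-\sup_{\phi:\,d(P_\phi,P^\star)\ge\varepsilon}\widetilde{\mathcal{J}}(\phi)>0$. Then $d(P_{\hat\phi_N},P^\star)\to0$ in probability. In particular, if the model is well specified, i.e. $P^\star=P_0$, then $d(P_{\hat\phi_N},P_0)\to0$ in probability.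
   Context: $\pi_Z$ is the standard Gaussian prior on $\mathbb{R}^{d_z}$; $\pi_\theta$ is a Gaussian prior on the parameters $\theta$ of a neural network that outputs a mean vector $\mu(z)$ and diagonal variances $\sigma_1^2(z),\dots,\sigma_p^2(z)$; $P(x\mid z;\theta)=\mathcal{N}(\mu(z),\mathrm{diag}(\sigma_1^2(z),\dots,\sigma_p^2(z)))$; $q_\phi(\theta)=\mathcal{N}(\theta\mid\mu_\phi,\mathrm{diag}(\sigma_\phi^2))$ is a Gaussian variational distribution with parameters $\phi=(\mu_\phi,\sigma_\phi^2)$. The sieve sets $\Phi_N$ restrict weight norms and spectral norms and enforce a floor and ceiling on the variances. *)

From HB Require Import structures.
From mathcomp Require Import all_boot all_order all_algebra.
From mathcomp Require Import all_classical all_reals all_analysis.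
Set Implicit Arguments. Unset Strict Implicit. Unset Printing Implicit Defensive.
Import Order.TTheory GRing.Theory Num.Theory numFieldNormedType.Exports.
Local Open Scope classical_set_scope.
Local Open Scope ring_scope.

(* Observation space R^p, represented as p-tuples of reals with the product
   (= Borel) sigma-algebra. *)
Notation obs R p := (p.-tuple R).

Definition eucl_dist {R : realType} {p : nat} (x y : obs R p) : R :=
  Num.sqrt (\sum_(i < p) (tnth x i - tnth y i) ^+ 2).

Definition BL1 {R : realType} {p : nat} (f : obs R p -> R) : Prop :=
  (forall x, `|f x| <= 1) /\ (forall x y, `|f x - f y| <= eucl_dist x y).

Definition bl_dist {R : realType} {p : nat}
    (P Q : probability (obs R p) R) : \bar R :=
  ereal_sup [set `| (\int[P]_x (f x)%:E - \int[Q]_x (f x)%:E)%E |%E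
            | f in [set f : obs R p -> R | BL1 f]].

Definition outer_prob {d} {Om : measurableType d} {R : realType}
    (P : probability Om R) (B : set Om) : \bar R :=
  ereal_inf [set P A | A in [set A | measurable A /\ B `<=` A]].

Definition cvg_in_prob0 {d} {Om : measurableType d} {R : realType}
    (P : probability Om R) (Y : nat -> Om -> \bar R) : Prop :=
  forall eps : R, 0 < eps ->
    (fun N => outer_prob P [set w | (eps%:E < `|Y N w|)%E]) @ \oo --> 0%E.

Definition iid {d} {Om : measurableType d} {R : realType} {p : nat}
    (P : probability Om R) (X : nat -> Om -> obs R p)
    (P0 : probability (obs R p) R) : Prop :=
  (forall i, measurable_fun setT (X i)) /\
  (forall i A, measurable A -> P (X i @^-1` A) = P0 A) /\
  (forall (I : seq nat) (A : nat -> set (obs R p)), uniq I ->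
     (forall i, measurable (A i)) ->
     P (\bigcap_(i in [set i | i \in I]) (X i @^-1` A i)) =
     (\prod_(i <- I) P (X i @^-1` A i))%E).

Definition Jpop {R : realType} {p : nat} {Par : Type}
    (P0 : probability (obs R p) R) (m : obs R p -> Par -> \bar R)
    (KL : Par -> R) (phi : Par) : \bar R :=
  (\int[P0]_x m x phi - (KL phi)%:E)%E.

Definition Jemp {R : realType} {p : nat} {Par : Type} {Om : Type}
    (X : nat -> Om -> obs R p) (m : obs R p -> Par -> \bar R)
    (KL : Par -> R) (N : nat) (w : Om) (phi : Par) : \bar R :=
  ((N%:R^-1)%:E * (\sum_(i < N) m (X i w) phi) - (KL phi)%:E)%E.

(* If the uniform deviation |J_N - J| on the sieve, the optimization gap and the
   sieve error are all at most eta, then the estimator's population objective is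
   within 4 eta of sup J; by (i)-(iii) and subadditivity of outer probability
   this happens with probability tending to one.  By the separation (iv), a
   parameter whose law is eps-far from Pstar loses Delta(eps) > 4 eta in
   objective, so on that event d(P_phihat, Pstar) < eps. *)
From HB Require Import structures.
From mathcomp Require Import all_boot all_order all_algebra.
From mathcomp Require Import all_classical all_reals all_analysis.
From mathcomp Require Import lra.
Import Order.TTheory GRing.Theory Num.Theory numFieldNormedType.Exports.
Local Open Scope classical_set_scope.
Local Open Scope ring_scope.
Local Open Scope ereal_scope.

Section OuterProbability.
Context {d} {Om : measurableType d} {R : realType} (P : probability Om R).

Lemma outer_prob_ge0 B : 0 <= outer_prob P B.
Proof. by apply: le_ereal_inf_tmp => _ [A [mA _] <-]; exact: measure_ge0. Qed.

Lemma outer_prob_le1 B : outer_prob P B <= 1.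
Proof.
rewrite -(probability_setT P).
by apply: ereal_inf_lbound; exists setT.
Qed.

Lemma outer_prob_fin_num B : outer_prob P B \is a fin_num.
Proof.
by rewrite ge0_fin_numE ?outer_prob_ge0 // (le_lt_trans (outer_prob_le1 B)) ?ltry.
Qed.

Lemma outer_prob_subU E A B : E `<=` A `|` B ->
  outer_prob P E <= outer_prob P A + outer_prob P B.
Proof.
move=> EAB; apply/lee_addgt0Pr => e e0.
have e20 : (0 < e / 2)%R by rewrite divr_gt0.
have [_ [A' [mA' AA'] <-] hA] := lb_ereal_inf_adherent e20 (outer_prob_fin_num A).
have [_ [B' [mB' BB'] <-] hB] := lb_ereal_inf_adherent e20 (outer_prob_fin_num B).
apply: (@le_trans _ _ (P (A' `|` B'))).
  apply: ereal_inf_lbound; exists (A' `|` B') => //; split.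
    exact: measurableU.
  by move=> x /EAB [/AA'|/BB']; [left|right].
apply: (le_trans (measureU2 _ mA' mB')).
rewrite (splitr e) EFinD addeACA.
by apply: leeD; exact: ltW.
Qed.

Lemma outer_prob_cvg0_subU {E A B : nat -> set Om} :
  (fun N => outer_prob P (A N)) @ \oo --> 0 ->
  (fun N => outer_prob P (B N)) @ \oo --> 0 ->
  (\forall N \near \oo, E N `<=` A N `|` B N) ->
  (fun N => outer_prob P (E N)) @ \oo --> 0.
Proof.
move=> A0 B0 EAB.
apply: (@squeeze_cvge _ _ _ _ (cst 0) _ (fun N => outer_prob P (A N) + outer_prob P (B N))).
- near=> N; rewrite outer_prob_ge0 /=.
  by apply: outer_prob_subU; near: N.
- exact: cvg_cst.
- by rewrite -[0]adde0; apply: cvgeD.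
Unshelve. all: end_near.
Qed.

End OuterProbability.

Section ExtendedReals.
Context {R : realType}.
Implicit Types (x y s t : \bar R) (e : R).

Lemma abse_subr_le_EFin {x y e} : `|x - y| <= e%:E ->
  exists a b, [/\ x = a%:E, y = b%:E & (`|a - b| <= e)%R].
Proof.
case: x => [a||]; case: y => [b||] //=; rewrite ?leye_eq //.
by move=> h; exists a, b; split=> //; rewrite -lee_fin.
Qed.

Lemma lt_fin_num_margin {s t} : s \is a fin_num -> 0 < s - t ->
  exists2 e, (0 < e)%R & t < (fine s - e)%:E.
Proof.
move=> sfin; rewrite -(fineK sfin); case: t => [t||] //=.
  rewrite -EFinB lte_fin subr_gt0 => ts.
  exists ((fine s - t) / 2)%R; first by rewrite divr_gt0 // subr_gt0.
  rewrite lte_fin; lra.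
by move=> _; exists 1%R => //; rewrite ltNyr.
Qed.

Lemma subr_cvg0_fin_num {s} {u : nat -> \bar R} :
  (fun N => s - u N) @ \oo --> 0 -> s \is a fin_num.
Proof.
move=> /fine_cvgP[[N0 _ finN0] _].
by have := finN0 N0 (leqnn N0); rewrite fin_numB => /andP[].
Qed.

Lemma subr_cvg0_near_ge {s} {u : nat -> \bar R} e :
  (fun N => s - u N) @ \oo --> 0 -> (0 < e)%R ->
  \forall N \near \oo, (fine s - e)%:E <= u N.
Proof.
move=> su0 e0; have sfin := subr_cvg0_fin_num su0.
move/fine_cvgP: su0 => [finsu /cvgrPdist_lt /(_ e e0) close].
near=> N.
have : s - u N \is a fin_num by near: N.
rewrite fin_numB sfin /= => ufin.
have : (`|0 - fine (s - u N)| < e)%R by near: N.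
rewrite -(fineK sfin) -(fineK ufin) /= sub0r normrN ltr_norml lee_fin.
move=> /andP[? ?]; lra.
Unshelve. all: end_near.
Qed.

(* The uniform deviation is paid twice: at ph, and when comparing the suprema of
   JN and J over S. *)
Lemma approx_argmax_ge {T : Type} {S : set T} {J JN : T -> \bar R} {ph} {s eta : R} :
  S ph ->
  ereal_sup [set `|JN f - J f| | f in S] <= eta%:E ->
  `|ereal_sup (JN @` S) - JN ph| <= eta%:E ->
  (s - eta)%:E <= ereal_sup (J @` S) ->
  (s - 4 * eta)%:E <= J ph.
Proof.
move=> Sph dev gap approx.
have devS f : S f -> `|JN f - J f| <= eta%:E.
  by move=> Sf; apply: le_trans dev; apply: ereal_sup_ubound; exists f.
have [a [b [JNph Jph ab]]] := abse_subr_le_EFin (devS _ Sph).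
have [c [a' [supJN JNph' ca]]] := abse_subr_le_EFin gap.
move: JNph'; rewrite JNph => -[a'_eq]; subst a'.
have supJ_le : ereal_sup (J @` S) <= (c + eta)%:E.
  apply: ge_ereal_sup => _ [f Sf <-].
  have [a1 [b1 [JNf Jf ab1]]] := abse_subr_le_EFin (devS _ Sf).
  have : JN f <= c%:E by rewrite -supJN; apply: ereal_sup_ubound; exists f.
  move: ab1; rewrite JNf Jf !lee_fin ler_norml => /andP[? ?] ?; lra.
move: (le_trans approx supJ_le); rewrite Jph !lee_fin.
by move: ab ca; rewrite !ler_norml => /andP[? ?] /andP[? ?] ?; lra.
Qed.

End ExtendedReals.

Section ArgmaxConsistency.
Context {d} {Om : measurableType d} {R : realType} (P : probability Om R).
Context {T : Type} {Phi : set T} {PhiN : nat -> set T}.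
Context {J : T -> \bar R} {JN : nat -> Om -> T -> \bar R}.
Context {dist : T -> \bar R} {phihat : nat -> Om -> T}.

Hypothesis PhiN_sub : forall N, PhiN N `<=` Phi.
Hypothesis phihat_in : forall N w, PhiN N (phihat N w).
Hypothesis dist_ge0 : forall phi, 0 <= dist phi.
Hypothesis uniform_dev : cvg_in_prob0 P (fun N w =>
  ereal_sup [set `|JN N w phi - J phi| | phi in PhiN N]).
Hypothesis optim_gap : cvg_in_prob0 P (fun N w =>
  ereal_sup (JN N w @` PhiN N) - JN N w (phihat N w)).
Hypothesis sieve_approx :
  (fun N => ereal_sup (J @` Phi) - ereal_sup (J @` PhiN N)) @ \oo --> 0.
Hypothesis well_separated : forall eps : R, (0 < eps)%R ->
  0 < ereal_sup (J @` Phi) - ereal_sup (J @` [set phi | Phi phi /\ eps%:E <= dist phi]).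

Theorem approx_argmax_consistent : cvg_in_prob0 P (fun N w => dist (phihat N w)).
Proof.
move=> eps eps0.
set s := ereal_sup (J @` Phi).
set s_far := ereal_sup (J @` [set phi | Phi phi /\ eps%:E <= dist phi]).
have sfin : s \is a fin_num := subr_cvg0_fin_num sieve_approx.
have [e e0 far_lt] := lt_fin_num_margin sfin (well_separated _ eps0).
have eta0 : (0 < e / 4)%R by rewrite divr_gt0.
apply: (outer_prob_cvg0_subU P (uniform_dev _ eta0) (optim_gap _ eta0)).
near=> N => w /= far.
have approx : ((fine s - e / 4)%:E <= ereal_sup (J @` PhiN N)).
  by near: N; exact: subr_cvg0_near_ge.
apply/orP; rewrite !ltNge -negb_and; apply/negP => /andP[small_dev small_gap].
have := approx_argmax_ge (phihat_in N w) (le_trans (lee_abs _) small_dev) small_gap approx.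
rewrite mulrC divfK ?pnatr_eq0 // => close.
have J_le_far : J (phihat N w) <= s_far.
  apply: ereal_sup_ubound; exists (phihat N w) => //.
  split; first exact: PhiN_sub (phihat_in N w).
  by move: far; rewrite gee0_abs // => /ltW.
by have := lt_le_trans far_lt (le_trans close J_le_far); rewrite ltxx.
Unshelve. all: end_near.
Qed.

End ArgmaxConsistency.

Section BoundedLipschitz.
Context {R : realType} {p : nat}.
Implicit Types Q : probability (obs R p) R.

Lemma bl_dist_ge0 Q1 Q2 : 0 <= bl_dist Q1 Q2.
Proof.
apply: le_trans (abse_ge0 (\int[Q1]_x (0:R)%:E - \int[Q2]_x (0:R)%:E)) _.
apply: ereal_sup_ubound; exists (cst 0%R) => //; split => x.
  by rewrite normr0.
by move=> y; rewrite subrr normr0 /eucl_dist sqrtr_ge0.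
Qed.

Lemma eq_bl_dist_r Q Q1 Q2 :
  (forall A, measurable A -> Q1 A = Q2 A) -> bl_dist Q Q1 = bl_dist Q Q2.
Proof.
move=> Q12; rewrite /bl_dist; congr ereal_sup; apply/funext => y; apply/propext.
split=> -[f BLf <-]; exists f => //; congr (`| _ - _ |);
  apply: eq_measure_integral => A mA _.
- exact/esym/Q12.
- exact: Q12.
Qed.

End BoundedLipschitz.

Local Close Scope ereal_scope.

Theorem theorem3
  (R : realType) (p dtheta : nat)
  (* probability space carrying the data *)
  (d0 : measure_display) (Om : measurableType d0) (P : probability Om R)
  (* unknown data law and i.i.d. sample *)
  (P0 : probability (obs R p) R) (X : nat -> Om -> obs R p)
  (* variational parameters phi = (mu_phi, sigma_phi^2) *)
  (Phi : set ('rV[R]_dtheta * 'rV[R]_dtheta))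
  (* observable law P_phi, profiled criterion m(x;phi), KL(q_phi || pi_theta) *)
  (Pobs : 'rV[R]_dtheta * 'rV[R]_dtheta -> probability (obs R p) R)
  (m : obs R p -> 'rV[R]_dtheta * 'rV[R]_dtheta -> \bar R)
  (KL : 'rV[R]_dtheta * 'rV[R]_dtheta -> R)
  (Pstar : probability (obs R p) R)
  (PhiN : nat -> set ('rV[R]_dtheta * 'rV[R]_dtheta))
  (phihat : nat -> Om -> 'rV[R]_dtheta * 'rV[R]_dtheta) :
  iid P X P0 ->
  (forall phi, Phi phi -> forall j, 0 < phi.2 ord0 j) ->
  (* all maximizers of the population objective induce the same law P* *)
  (forall phi, Phi phi ->
     Jpop P0 m KL phi = ereal_sup (Jpop P0 m KL @` Phi) ->
     forall A, measurable A -> Pobs phi A = Pstar A) ->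
  (* sieve *)
  (forall N, PhiN N `<=` PhiN N.+1) ->
  (forall N, PhiN N `<=` Phi) ->
  Phi `<=` closure (\bigcup_N PhiN N) ->
  (forall N w, PhiN N (phihat N w)) ->
  (* (i) uniform deviation *)
  cvg_in_prob0 P (fun N w =>
     ereal_sup [set `|(Jemp X m KL N w phi - Jpop P0 m KL phi)%E|%E
               | phi in PhiN N]) ->
  (* (ii) algorithmic suboptimality *)
  cvg_in_prob0 P (fun N w =>
     (ereal_sup (Jemp X m KL N w @` PhiN N) - Jemp X m KL N w (phihat N w))%E) ->
  (* (iii) sieve approximation error *)
  (fun N => (ereal_sup (Jpop P0 m KL @` Phi)
             - ereal_sup (Jpop P0 m KL @` PhiN N))%E) @ \oo --> 0%E ->
  (* (iv) well-separated maximum *)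
  (forall eps : R, 0 < eps ->
     (0 < ereal_sup (Jpop P0 m KL @` Phi)
          - ereal_sup (Jpop P0 m KL @`
               [set phi | Phi phi /\ (eps%:E <= bl_dist (Pobs phi) Pstar)%E]))%E) ->
  cvg_in_prob0 P (fun N w => bl_dist (Pobs (phihat N w)) Pstar) /\
  ((forall A, measurable A -> Pstar A = P0 A) ->
   cvg_in_prob0 P (fun N w => bl_dist (Pobs (phihat N w)) P0)).
Proof.
(* Identifiability, nestedness and density of the sieve, the i.i.d. structure and
   positivity of the variances are only what makes (i)-(iv) hold in practice;
   the conclusion needs (i)-(iv) alone. *)
move=> _ _ _ _ PhiN_sub _ phihat_in dev gap approx sep.
have consistent : cvg_in_prob0 P (fun N w => bl_dist (Pobs (phihat N w)) Pstar).
  exact: (approx_argmax_consistent P PhiN_sub phihat_in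
           (fun phi => bl_dist_ge0 _ _) dev gap approx sep).
split=> // Pstar_P0.
suff -> : (fun N w => bl_dist (Pobs (phihat N w)) P0) =
          (fun N w => bl_dist (Pobs (phihat N w)) Pstar) by [].
by apply/funext => N; apply/funext => w; exact/esym/eq_bl_dist_r.
Qed.
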